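(* Let $n\in\mathbb N$ and $c\in(0,1)$. Then, as $x\to+\infty$, $\mathbb P^T_n(x)=o(\log x)$ and $\mathbb P^T_n(x)=\omega(\log^c x)$ (i.e. $\mathbb P^T_n(x)/\log^c x\to+\infty$). In particular $\log\mathbb P^T_n(x)\sim\log\log x$.
   Context: Let $p_n$ denote the $n$-th prime number. Define $p^{(0)}_n=n$ and recursively $p^{(k+1)}_n=p_{p^{(k)}_n}$ for $k\in\mathbb N_0$. Let $\mathbb P^T_n=\{p^{(k)}_n:k\in\mathbb N\}$ and $\mathbb P^T_n(x)=\#\{a\le x: a\in\mathbb P^T_n\}$. $\log$ is the natural logarithm, $\log^c x=(\log x)^c$. *)

From HB Require Import structures.
From mathcomp Require Import all_boot all_order all_algebra.
From mathcomp Require Import all_classical all_reals all_analysis.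
Set Implicit Arguments. Unset Strict Implicit. Unset Printing Implicit Defensive.
Import Order.TTheory GRing.Theory Num.Theory.

Lemma exists_prime_gt (m : nat) : exists p, (m < p) && prime p.
Proof. by case: (prime_above m) => p H1 H2; exists p; rewrite H1 H2. Qed.

Definition next_prime (m : nat) : nat := ex_minn (exists_prime_gt m).

(* nth_prime n = p_n, the n-th prime with 1-based indexing: p_1 = 2, p_2 = 3, ...
   (nth_prime 0 = 1 is a dummy value, never used for n >= 1). *)
Definition nth_prime (n : nat) : nat := iter n next_prime 1.

Definition iter_prime (k n : nat) : nat := iter k nth_prime n.

Definition inPT (n a : nat) : Prop := exists k, (1 <= k)%N /\ a = iter_prime k n.

(* P^T_n(x) = #{ a <= x : a in P^T_n }, for real x (natural a <= x iff a <= truncn x, x >= 0). *)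
Definition PT (R : realType) (n : nat) (x : R) : nat :=
  (\sum_(0 <= a < (Num.truncn x).+1 | `[< inPT n a >]) 1)%N.

From HB Require Import structures.
From mathcomp Require Import all_boot all_order all_algebra.
From mathcomp Require Import all_classical all_reals all_analysis.
From mathcomp Require Import zify ring lra.
Set Implicit Arguments. Unset Strict Implicit. Unset Printing Implicit Defensive.
Import Order.TTheory GRing.Theory Num.Theory numFieldNormedType.Exports.

(* Everything rests on Chebyshev's estimates 2^m <= C(2m, m) <= 4^m.  The
   primes of (m, 2m] all divide C(2m, m), so there are O(m / log m) of them;
   hence pi(y) = o(y), i.e. p_m / m -> oo: eventually every step of the
   iteration multiplies p^(k)_n by an arbitrarily large constant, and only
   o(log x) iterates lie below x.  Every prime power dividing C(2m, m) is at
   most 2m, so pi(2^s) >= 2^(s-1) / s and p_a <= 2^(e + D) whenever a <= 2^e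
   and e + D <= 2^(D-1): every step adds only about log2 log2 x to
   log2 p^(k)_n, so at least about log x / log log x iterates lie below x,
   which beats log^c x for c < 1.  The two bounds squeeze
   log P^T_n(x) / log log x to 1. *)

Lemma next_primeP q :
  [/\ q < next_prime q, prime (next_prime q)
    & forall p, q < p -> prime p -> next_prime q <= p].
Proof.
rewrite /next_prime; case: ex_minnP => p /andP[qp pp] minp.
by split=> // r qr pr; apply: minp; rewrite qr pr.
Qed.

Lemma nth_primeS m : nth_prime m.+1 = next_prime (nth_prime m).
Proof. exact: iterS. Qed.

Lemma nth_prime_gt m : m < nth_prime m.
Proof.
elim: m => // m IHm; rewrite nth_primeS.
by case: (next_primeP (nth_prime m)) => + _ _; apply: leq_trans.
Qed.

Definition primepi y := count prime (iota 1 y).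

Lemma primepiD y k : primepi (y + k) = primepi y + count prime (iota y.+1 k).
Proof. by rewrite /primepi iotaD count_cat add1n. Qed.

Lemma primepiS y : primepi y.+1 = primepi y + prime y.+1.
Proof. by rewrite -[in LHS]addn1 primepiD /= addn0. Qed.

Lemma leq_primepi : {homo primepi : y z / y <= z}.
Proof. by move=> y z /subnKC <-; rewrite primepiD leq_addr. Qed.

Lemma primepi_le y : primepi y <= y.
Proof. by rewrite -[X in _ <= X](size_iota 1) count_size. Qed.

Lemma primepi_lt_next_prime q y : y < next_prime q -> primepi y <= primepi q.
Proof.
case: (next_primeP q) => _ _ minp yq; case: (leqP y q) => [/leq_primepi //|qy].
rewrite -(subnKC (ltnW qy)) primepiD -[X in _ <= X]addn0 leq_add2l leqn0.
rewrite eqn0Ngt -has_count; apply/hasPn => p; rewrite mem_iota => /andP[qp py].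
by apply/negP => /(minp p qp); lia.
Qed.

Lemma primepi_next_prime q : primepi (next_prime q) = (primepi q).+1.
Proof.
case: (next_primeP q) => qp pp _; rewrite -(ltn_predK qp) primepiS (ltn_predK qp).
rewrite pp addn1; congr _.+1; apply/eqP; rewrite eqn_leq.
rewrite primepi_lt_next_prime ?(ltn_predK qp) //.
by rewrite leq_primepi // -ltnS (ltn_predK qp).
Qed.

Lemma primepi_nth_prime m : primepi (nth_prime m) = m.
Proof. by elim: m => // m IHm; rewrite nth_primeS primepi_next_prime IHm. Qed.

Lemma leq_nth_prime m y : 0 < m -> (nth_prime m <= y) = (m <= primepi y).
Proof.
case: m => // m _; apply/idP/idP => [/leq_primepi|].
  by rewrite primepi_nth_prime.
apply: contraTT; rewrite -!ltnNge nth_primeS => /primepi_lt_next_prime.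
by rewrite primepi_nth_prime ltnS.
Qed.

Lemma prime_dvd_fact p n : prime p -> (p %| n`!) = (p <= n).
Proof.
move=> pp; apply/idP/idP => [|pn]; last by rewrite dvdn_fact ?prime_gt0.
rewrite fact_prod Euclid_dvd_prod // big_has => /hasP[i].
by rewrite mem_index_iota => /andP[i0 iS] /(dvdn_leq i0); lia.
Qed.

Lemma prod_uniq_primes_dvd s n :
  uniq s -> all prime s -> all (fun p => p %| n) s -> \prod_(p <- s) p %| n.
Proof.
elim: s => [|p s IHs] /=; first by rewrite big_nil dvd1n.
case/andP=> ps us /andP[pp prs] /andP[pn sn].
rewrite big_cons Gauss_dvd ?pn ?IHs // prime_coprime // Euclid_dvd_prod //.
rewrite big_has; apply/hasPn => q qs; rewrite dvdn_prime2 ?(allP prs q qs) //.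
by apply: contraNneq ps => ->.
Qed.

Lemma bin_mid_fact m : 'C(m.*2, m) * (m`! * m`!) = (m.*2)`!.
Proof. by have := bin_fact (leq_addr m m); rewrite addnK addnn. Qed.

Lemma bin_mid_gt0 m : 0 < 'C(m.*2, m).
Proof. by rewrite bin_gt0 -addnn leq_addr. Qed.

Lemma bin_mid_ge m : 2 ^ m <= 'C(m.*2, m).
Proof.
elim: m => // m IHm; rewrite doubleS binS expnS.
have -> : 'C(m.*2.+1, m) = 'C(m.*2.+1, m.+1).
  have m2 : m <= m.*2 by rewrite -addnn leq_addr.
  by rewrite -bin_sub ?(leqW m2) // subSn // -addnn addnK.
by rewrite addnn mul2n leq_double binS (leq_trans IHm) ?leq_addl.
Qed.

Lemma bin_mid_le m : 'C(m.*2, m) <= 4 ^ m.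
Proof.
have -> : 4 ^ m = (1 + 1) ^ m.*2 by rewrite -mul2n expnM.
have hm : m < m.*2.+1 by rewrite ltnS -addnn leq_addr.
rewrite expnDn (bigD1 (Ordinal hm)) //=.
by rewrite !exp1n !muln1 leq_addr.
Qed.

Lemma divn_double_le m d : 0 < d -> m.*2 %/ d <= (m %/ d).*2 + (d <= m.*2).
Proof.
move=> d0; case: (leqP d m.*2) => [_|/divn_small-> //].
by rewrite -ltnS ltn_divLR //; have := ltn_ceil m d0; rewrite mulSn; nia.
Qed.

Lemma logn_fact_wide p m N : prime p -> m <= N ->
  logn p m`! = \sum_(1 <= k < N.+1) m %/ p ^ k.
Proof.
move=> pp mN; rewrite logn_fact // (@big_cat_nat _ _ _ m.+1 1 N.+1) //=.
rewrite [X in _ = _ + X]big1_seq ?addn0 // => k /andP[_].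
rewrite mem_index_iota => /andP[mk _].
by rewrite divn_small // (leq_trans mk) // ltnW // ltn_expl // prime_gt1.
Qed.

Lemma sum_leq_indicator N T : \sum_(1 <= k < N.+1) (k <= T) = minn N T.
Proof.
elim: N => [|N IHN]; first by rewrite big_geq // min0n.
by rewrite big_nat_recr //= IHN; case: (leqP N.+1 T) => /=; lia.
Qed.

Lemma logn_bin_mid_le p m : prime p -> logn p 'C(m.*2, m) <= trunc_log p m.*2.
Proof.
move=> pp; set T := trunc_log p m.*2.
have m2 : m <= m.*2 by rewrite -addnn leq_addr.
have := congr1 (logn p) (bin_mid_fact m).
rewrite !lognM ?muln_gt0 ?fact_gt0 ?bin_mid_gt0 // (logn_fact_wide pp m2).
rewrite logn_fact // => E.
(* Legendre: the k-th term of logn p C(2m, m) is 2m %/ p^k - 2 (m %/ p^k),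
   which is at most 1 and vanishes once p^k > 2m. *)
have : \sum_(1 <= k < m.*2.+1) m.*2 %/ p ^ k <=
       \sum_(1 <= k < m.*2.+1) (m %/ p ^ k + m %/ p ^ k + (k <= T)).
  apply: leq_sum => k _; have pk : 0 < p ^ k by rewrite expn_gt0 prime_gt0.
  rewrite addnn; apply: leq_trans (divn_double_le m pk) _.
  rewrite leq_add2l; case pkm: (p ^ k <= m.*2) => //.
  by rewrite (trunc_log_max (prime_gt1 pp) pkm).
rewrite !big_split /= sum_leq_indicator -E.
by have := geq_minr m.*2 T; lia.
Qed.

Lemma pfactor_bin_mid_le p m : prime p -> 0 < m -> p ^ logn p 'C(m.*2, m) <= m.*2.
Proof.
move=> pp m0; have m2 : 0 < m.*2 by rewrite double_gt0.
apply: leq_trans (trunc_logP (prime_gt1 pp) m2).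
by rewrite leq_pexp2l ?prime_gt0 ?logn_bin_mid_le.
Qed.

Lemma bin_mid_le_primepi m : 0 < m -> 'C(m.*2, m) <= m.*2 ^ primepi m.*2.
Proof.
move=> m0; have C0 := bin_mid_gt0 m; set C := 'C(m.*2, m) in C0 *.
have primes_le p : p \in primes C -> prime p /\ p <= m.*2.
  move=> pC; have lg : 0 < logn p C by rewrite logn_gt0.
  move: pC; rewrite mem_primes => /andP[pp _]; split=> //.
  apply: leq_trans (pfactor_bin_mid_le pp m0).
  by rewrite -{1}(expn1 p) leq_exp2l ?prime_gt1.
rewrite {1}(prod_prime_decomp C0) prime_decompE big_map /=.
apply: (@leq_trans (\prod_(p <- primes C) m.*2)).
  rewrite big_seq [X in _ <= X]big_seq.
  by apply: leq_prod => p /primes_le[pp _]; apply: pfactor_bin_mid_le.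
rewrite big_const_seq count_predT iter_muln_1 leq_pexp2l ?double_gt0 //.
rewrite /primepi -size_filter uniq_leq_size ?primes_uniq // => p /primes_le[pp pm].
by rewrite mem_filter pp mem_iota prime_gt0.
Qed.

Lemma pow2_le_primepi s : 2 ^ s <= s.+1 * primepi (2 ^ s.+1).
Proof.
have := leq_trans (bin_mid_ge (2 ^ s)) (bin_mid_le_primepi (expn_gt0 2 s)).
by rewrite -mul2n -expnS -expnM leq_exp2l.
Qed.

Lemma primes_between_le m : m ^ count prime (iota m.+1 m) <= 4 ^ m.
Proof.
set s := [seq p <- iota m.+1 m | prime p].
have -> : m ^ count prime (iota m.+1 m) = \prod_(p <- s) m.
  by rewrite big_const_seq count_predT iter_muln_1 size_filter.
have mem_s p : p \in s -> prime p /\ m < p <= m.*2.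
  by rewrite mem_filter mem_iota -addnn addSn ltnS => /andP[].
apply: leq_trans (bin_mid_le m); apply: (@leq_trans (\prod_(p <- s) p)).
  rewrite big_seq [X in _ <= X]big_seq.
  by apply: leq_prod => p /mem_s[_ /andP[/ltnW]].
apply: dvdn_leq (bin_mid_gt0 m) (prod_uniq_primes_dvd _ _ _).
- by rewrite filter_uniq ?iota_uniq.
- exact: filter_all.
apply/allP => p /mem_s[pp /andP[mp pm]].
have : p %| (m.*2)`! by rewrite prime_dvd_fact.
by rewrite -bin_mid_fact !Euclid_dvdM // !prime_dvd_fact // leqNgt mp orbF.
Qed.

Lemma primes_dyadic_le j : j * count prime (iota (2 ^ j).+1 (2 ^ j)) <= 2 ^ j.+1.
Proof.
have := primes_between_le (2 ^ j).
by rewrite -expnM (_ : 4 = 2 ^ 2) // -expnM -expnS leq_exp2l.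
Qed.

Lemma primepi_pow2_le J0 i :
  J0 * primepi (2 ^ (J0 + i)) <= J0 * 2 ^ J0 + 2 ^ (J0 + i).+1.
Proof.
elim: i => [|i IHi].
  by rewrite addn0 (leq_trans _ (leq_addr _ _)) // leq_mul2l primepi_le orbT.
rewrite addnS expnS mul2n -addnn primepiD mulnDr.
have := primes_dyadic_le (J0 + i).
have : J0 * count prime (iota (2 ^ (J0 + i)).+1 (2 ^ (J0 + i))) <=
       (J0 + i) * count prime (iota (2 ^ (J0 + i)).+1 (2 ^ (J0 + i))).
  by rewrite leq_mul2r leq_addr orbT.
rewrite !expnS in IHi *; lia.
Qed.

Lemma primepi_sublinear M : exists y0, forall y, y0 <= y -> M * primepi y <= y.
Proof.
set J0 := (5 * M).+1; exists (J0 * 2 ^ J0) => y y0y.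
have y_ge : 2 ^ J0 <= y by apply: leq_trans y0y; rewrite leq_pmull.
have y_gt0 : 0 < y := leq_trans (expn_gt0 2 J0) y_ge.
set J := trunc_log 2 y.
have J0J : J0 <= J by apply: trunc_log_max.
have := primepi_pow2_le J0 (J.+1 - J0); rewrite subnKC ?(leqW J0J) //.
have : J0 * primepi y <= J0 * primepi (2 ^ J.+1).
  by rewrite leq_mul2l leq_primepi ?orbT // ltnW // trunc_log_ltn.
have := trunc_logP (ltnSn 1) y_gt0; rewrite -/J !(expnS 2 J.+1) !(expnS 2 J); lia.
Qed.

Lemma nth_prime_superlinear M :
  exists m0, forall m, m0 <= m -> M * m <= nth_prime m.
Proof.
case: (primepi_sublinear M) => y0 sub; exists y0 => m m0m.
rewrite -{1}(primepi_nth_prime m) sub //.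
exact: leq_trans m0m (ltnW (nth_prime_gt m)).
Qed.

Lemma nth_prime_le_pow2 e D a : e + D.+1 <= 2 ^ D -> 0 < a <= 2 ^ e ->
  nth_prime a <= 2 ^ (e + D.+1).
Proof.
move=> eD /andP[a0 ae]; rewrite leq_nth_prime // addnS.
rewrite -(leq_pmul2l (ltn0Sn (e + D))) (leq_trans _ (pow2_le_primepi _)) //.
by rewrite expnD mulnC leq_mul // -addnS.
Qed.

Lemma iter_primeS k n : iter_prime k.+1 n = nth_prime (iter_prime k n).
Proof. exact: iterS. Qed.

Lemma iter_prime_ge k n : n + k <= iter_prime k n.
Proof.
elim: k => [|k IHk]; first by rewrite addn0.
by rewrite iter_primeS addnS (leq_ltn_trans IHk) ?nth_prime_gt.
Qed.

Lemma leq_iter_prime n : {mono iter_prime^~ n : j k / j <= k}.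
Proof.
apply: leq_mono; apply: homo_ltn ltn_trans _ => k.
by rewrite iter_primeS nth_prime_gt.
Qed.

Definition PTnat n N := count (fun a => `[< inPT n a >]) (iota 0 N.+1).

Lemma PT_PTnat (R : realType) n (x : R) : PT n x = PTnat n (Num.truncn x).
Proof. by rewrite /PT sum1_count. Qed.

Lemma PTnat_ge n N K : iter_prime K n <= N -> K <= PTnat n N.
Proof.
move=> KN; rewrite /PTnat -size_filter -[K](size_iota 1).
rewrite -(size_map (iter_prime^~ n)).
apply: uniq_leq_size => [|_ /mapP[k + ->]].
  by rewrite map_inj_uniq ?iota_uniq //; apply: incn_inj (leq_iter_prime n).
rewrite mem_iota add1n ltnS => /andP[k1 kK].
rewrite mem_filter mem_iota /= ltnS (leq_trans _ KN) ?leq_iter_prime // andbT.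
by apply/asboolP; exists k.
Qed.

Lemma PTnat_le n N K : N < iter_prime K.+1 n -> PTnat n N <= K.
Proof.
move=> NK; rewrite /PTnat -size_filter -[K in _ <= K](size_iota 1).
rewrite -(size_map (iter_prime^~ n) (iota 1 K)).
rewrite uniq_leq_size ?filter_uniq ?iota_uniq //.
move=> a; rewrite mem_filter mem_iota => /andP[/asboolP[k [k1 ->]] /= kN].
apply: map_f; rewrite mem_iota k1 add1n ltnS -ltnS.
by rewrite -(leqW_mono (leq_iter_prime n)) (leq_ltn_trans _ NK).
Qed.

Lemma PTnat_le_log n r : 0 < r ->
  exists m0, forall N, PTnat n N <= m0 + trunc_log 2 N %/ r.
Proof.
move=> r0; case: (nth_prime_superlinear (2 ^ r)) => m0 sup; exists m0.+1 => N.
have grow j : 2 ^ (r * j) <= iter_prime (m0.+1 + j) n.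
  elim: j => [|j IHj].
    by rewrite muln0 addn0 (leq_trans _ (iter_prime_ge _ _)) // addnS.
  rewrite addnS iter_primeS mulnS expnD (leq_trans _ (sup _ _)) //.
    by rewrite leq_mul2l IHj orbT.
  by apply: leq_trans (iter_prime_ge _ _); rewrite addnCA; apply/ltnW/leq_addr.
apply: PTnat_le; rewrite -addnS (leq_trans (trunc_log_ltn N (ltnSn 1))) //.
by rewrite (leq_trans _ (grow _)) // leq_exp2l // mulnC ltn_ceil.
Qed.

Lemma PTnat_ge_log n S N : 0 < n -> 2 ^ S <= N -> n <= S ->
  (S - n) %/ (trunc_log 2 S).+2 <= PTnat n N.
Proof.
move=> n0 SN nS; set D := (trunc_log 2 S).+1; set K := (S - n) %/ D.+1.
have KD : K * D.+1 <= S - n by apply: leq_divM.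
have SD : S < 2 ^ D by apply: trunc_log_ltn.
clearbody D K.
have bound k : k <= K -> iter_prime k n <= 2 ^ (n + k * D.+1).
  elim: k => [_|k IHk kK]; first by rewrite mul0n addn0; apply/ltnW/ltn_expl.
  rewrite iter_primeS mulSn addnCA addnC.
  apply: (nth_prime_le_pow2 (e := n + k * D.+1)).
    apply: leq_trans _ (ltnW SD); rewrite -addnA -leq_subRL // addnC -mulSn.
    by apply: leq_trans _ KD; rewrite leq_mul2r kK orbT.
  rewrite IHk ?(ltnW kK) // andbT.
  exact: leq_trans n0 (leq_trans (leq_addr k n) (iter_prime_ge k n)).
apply: PTnat_ge; apply: leq_trans (bound K (leqnn K)) (leq_trans _ SN).
by rewrite leq_exp2l // -leq_subRL.
Qed.

Lemma PTnat_ge_loglog n N : 0 < n -> n <= trunc_log 2 (trunc_log 2 N) ->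
  trunc_log 2 N < (PTnat n N).+1 * (trunc_log 2 (trunc_log 2 N)).+2 + n.
Proof.
move=> n0; set S := trunc_log 2 N; set T := trunc_log 2 S => nT.
have T0 : 0 < T := leq_trans n0 nT.
have S0 : 0 < S by move: T0; rewrite trunc_log_gt0 => /andP[_ /ltnW].
have TS : 2 ^ T <= S by apply: trunc_logP.
have nS : n <= S by rewrite (leq_trans nT) // ltnW // (leq_trans (ltn_expl T _) TS).
have N0 : 0 < N by move: S0; rewrite trunc_log_gt0 => /andP[_ /ltnW].
have SN : 2 ^ S <= N by apply: trunc_logP.
rewrite addnC -ltn_subLR // (leq_trans (ltn_ceil _ (ltn0Sn T.+1))) //.
by rewrite leq_mul2r ltnS PTnat_ge_log.
Qed.

Local Open Scope ring_scope.
Local Open Scope classical_set_scope.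

Section Asymptotics.
Variable R : realType.
Implicit Types x : R.

Lemma ln2_gt0 : 0 < ln (2 : R).
Proof. by apply: ln_gt0; lra. Qed.

Lemma nbhs_pinfty_ln_gt (A : R) : \forall x \near +oo, A < ln x.
Proof.
exists (expR A); split; first exact: num_real.
by move=> x Ax; rewrite -ltr_expR lnK // posrE (lt_trans (expR_gt0 A)).
Qed.

Lemma ln_trunc_log2 x : 1 <= x ->
  (trunc_log 2 (Num.truncn x))%:R * ln 2 <= ln x <=
  (trunc_log 2 (Num.truncn x)).+1%:R * ln 2.
Proof.
move=> x1; have x0 : 0 < x by apply: lt_le_trans x1.
set N := Num.truncn x; set S := trunc_log 2 N.
have N0 : (0 < N)%N by rewrite truncn_gt0.
have /andP[Nx xN] := truncn_itv (ltW x0).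
have lnpow k : k%:R * ln (2 : R) = ln (2 ^ k)%:R by rewrite natrX lnXn // mulr_natl.
have pow_pos k : ((2 ^ k)%:R : R) \in Num.pos by rewrite posrE ltr0n expn_gt0.
rewrite !lnpow !ler_ln ?posrE //; apply/andP; split.
  by apply: le_trans Nx; rewrite ler_nat trunc_logP.
by apply: le_trans (ltW xN) _; rewrite ler_nat trunc_log_ltn.
Qed.

Lemma PT_le_ln n (e : R) : 0 < e -> \forall x \near +oo, (PT n x)%:R <= e * ln x.
Proof.
move=> e0; have l2 := ln2_gt0; have el2 : 0 < e * ln 2 by rewrite mulr_gt0.
set r := (Num.truncn (2 / (e * ln 2))).+1.
have re : 2 <= r%:R * (e * ln 2) by rewrite -ler_pdivrMr // ltW // truncnS_gt.
have [m0 PTm0] := PTnat_le_log n (ltn0Sn (Num.truncn (2 / (e * ln 2)))).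
near=> x.
have x1 : 1 <= x by near: x; apply: nbhs_pinfty_ge; rewrite num_real.
have : 2 * m0%:R / e < ln x by near: x; apply: nbhs_pinfty_ln_gt.
rewrite ltr_pdivrMr // mulrC => lnx.
have /andP[Sx _] := ln_trunc_log2 x1.
rewrite PT_PTnat; have := PTm0 (Num.truncn x); rewrite -(ler_nat R) natrD.
set S := trunc_log 2 _; set q := (S %/ r)%N => PTle.
have qr : q%:R * r%:R <= S%:R :> R by rewrite -natrM ler_nat leq_divM.
have : 2 * q%:R <= e * ln x.
  apply: (@le_trans _ _ (S%:R * (e * ln 2))); last by rewrite mulrCA ler_wpM2l // ltW.
  apply: (@le_trans _ _ (q%:R * (r%:R * (e * ln 2)))); first by rewrite mulrC ler_wpM2l.
  by rewrite mulrA ler_wpM2r // ltW.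
lra.
Unshelve. all: by end_near.
Qed.

Lemma expr_ge_bin2 (d : R) T : 0 <= d -> d ^+ 2 *+ 'C(T, 2) <= (d + 1) ^+ T.
Proof.
move=> d0; have terms_ge0 (i : 'I_T.+1) : 0 <= d ^+ i *+ 'C(T, i).
  by rewrite mulrn_wge0 // exprn_ge0.
rewrite exprD1n; case: (ltnP T 2) => [T2|T2].
  by rewrite bin_small // mulr0n sumr_ge0.
rewrite (bigD1 (Ordinal (T2 : (2 < T.+1)%N))) //= lerDl.
exact: sumr_ge0.
Qed.

Lemma expr_beats_linear (q B : R) : 1 < q ->
  exists T0, forall T, (T0 <= T)%N -> B * T%:R <= q ^+ T.
Proof.
move=> q1; set d := q - 1; have d0 : 0 < d by rewrite subr_gt0.
exists (Num.truncn (2 * B / d ^+ 2)).+2 => T T0T.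
have binT : 'C(T, 2)%:R * 2 = T%:R * T.-1%:R :> R.
  by rewrite -!natrM mulnC -mul_bin_diag bin1.
have TB : 2 * B <= d ^+ 2 * T.-1%:R.
  rewrite [d ^+ 2 * _]mulrC -(ler_pdivrMr _ _ (exprn_gt0 2 d0)).
  apply/ltW/(lt_le_trans (truncnS_gt _)).
  by rewrite ler_nat -ltnS (ltn_predK T0T).
have -> : q = d + 1 by rewrite subrK.
apply: le_trans _ (expr_ge_bin2 T (ltW d0)); rewrite -[d ^+ 2 *+ _]mulr_natr.
rewrite -(ler_pM2r (ltr0n R 2)) -[d ^+ 2 * _ * 2]mulrA binT.
have := ler_wpM2r (ler0n R T) TB; nra.
Qed.

Lemma ln2_le1 : ln (2 : R) <= 1.
Proof. by have := @le_ln1Dx R 1; rewrite (_ : 1 + 1 = 2) //; apply; lra. Qed.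

Lemma lnpow_le_trunc_log2 x c : 1 <= x -> 0 <= c -> c <= 1 ->
  (0 < trunc_log 2 (Num.truncn x))%N ->
  ln x `^ c <= 2 * (trunc_log 2 (Num.truncn x))%:R `^ c.
Proof.
move=> x1 c0 c1; set S := trunc_log 2 _ => S0.
have lnx : ln x <= 2 * S%:R.
  have /andP[_ lnS] := ln_trunc_log2 x1; rewrite -/S -natr1 in lnS.
  have S1 : 1 <= S%:R :> R by rewrite ler1n.
  by apply: le_trans lnS _; apply: le_trans (ler_piMr _ ln2_le1) _; lra.
apply: le_trans (ge0_ler_powR c0 _ _ lnx) _; rewrite ?nnegrE ?ln_ge0 ?mulr_ge0 //.
rewrite powRM ?ler0n //; apply: ler_wpM2r; first exact: powR_ge0.
by apply: ler1_powR; lra.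
Qed.

Lemma powR_geometric_le (c : R) S T : c <= 1 -> (2 ^ T <= S)%N ->
  S%:R `^ c * ((2 : R) `^ (1 - c)) ^+ T <= S%:R.
Proof.
move=> c1 TS; have SE : S%:R `^ c * S%:R `^ (1 - c) = S%:R :> R.
  by rewrite -powRD addrC subrK ?powRr1 ?oner_eq0.
rewrite -powR_mulrn ?powR_ge0 // powRAC powR_mulrn // -natrX -[X in _ <= X]SE.
by rewrite ler_wpM2l ?powR_ge0 // ge0_ler_powR ?nnegrE ?ler0n ?ler_nat //; lra.
Qed.

Lemma lnpow_le_PT n (c A : R) : (0 < n)%N -> 0 < c -> c < 1 -> 0 <= A ->
  \forall x \near +oo, A * ln x `^ c <= (PT n x)%:R.
Proof.
move=> n0 c0 c1 A0; set q := (2 : R) `^ (1 - c).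
have q1 : 1 < q by rewrite /q /powR gt_eqF ?expR_gt1 ?mulr_gt0 ?ln2_gt0 //; lra.
set B := 2 * (2 * A + 1 + n%:R).
have [T0 qT0] := expr_beats_linear B q1.
set T1 := maxn (maxn 2 n) T0.
near=> x.
have xT1 : (2 ^ 2 ^ T1)%:R <= x by near: x; apply: nbhs_pinfty_ge; rewrite num_real.
have x1 : 1 <= x by apply: le_trans xT1; rewrite ler1n expn_gt0.
rewrite PT_PTnat; set N := Num.truncn x; set S := trunc_log 2 N.
set T := trunc_log 2 S; set K := PTnat n N.
have NT1 : (2 ^ 2 ^ T1 <= N)%N by rewrite truncn_ge_nat ?(le_trans ler01 x1).
have ST1 : (2 ^ T1 <= S)%N by apply: trunc_log_max.
have T1T : (T1 <= T)%N by apply: trunc_log_max.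
have TS : (2 ^ T <= S)%N by rewrite trunc_logP // (leq_trans _ ST1) ?expn_gt0.
have S0 : (0 < S)%N := leq_trans (expn_gt0 2 T) TS.
have T2 : 2 <= T%:R :> R by rewrite (ler_nat R 2) (leq_trans _ T1T) // !leq_max leqnn.
have nT : (n <= T)%N by rewrite (leq_trans _ T1T) // !leq_max leqnn orbT.
have KS := PTnat_ge_loglog n0 nT; rewrite -/S -/T -/K in KS.
rewrite -(ltr_nat R) natrD natrM -!natr1 in KS.
set P := S%:R `^ c.
have P1 : 1 <= P by rewrite -(powRr0 S%:R) ler_powR ?ler1n // ltW.
have lnc : ln x `^ c <= 2 * P by apply: lnpow_le_trunc_log2; rewrite ?ltW.
have qP : P * q ^+ T <= S%:R by apply: powR_geometric_le; rewrite ?ltW.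
have Bq : B * T%:R <= q ^+ T by apply: qT0; rewrite (leq_trans _ T1T) ?leq_maxr.
(* As T >= 2 and P >= 1, S >= P * B * T exceeds (2 * A * P + 1) * (T + 2) + n. *)
have key : (2 * A * P + 1) * (T%:R + 2) < (K%:R + 1) * (T%:R + 2).
  have := ler_wpM2l (le_trans ler01 P1) Bq.
  have : 0 <= A * P * (T%:R - 2) by rewrite !mulr_ge0 //; lra.
  have : 0 <= T%:R * (P - 1) by rewrite mulr_ge0 //; lra.
  have : 0 <= n%:R * (2 * P * T%:R - 1) :> R by rewrite mulr_ge0 //; nra.
  rewrite /B; nra.
rewrite ltr_pM2r in key; last lra.
by apply: le_trans (ler_wpM2l A0 lnc) _; lra.
Unshelve. all: by end_near.
Qed.

Lemma PT_over_ln_cvg0 n : (fun x => (PT n x)%:R / ln x) @ +oo --> (0 : R).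
Proof.
apply/cvgrPdist_lt => e e0; near=> x.
have lnx : 1 < ln x by near: x; apply: nbhs_pinfty_ln_gt.
have : (PT n x)%:R <= e / 2 * ln x by near: x; apply: PT_le_ln; rewrite divr_gt0.
have : e / 2 * ln x < e * ln x by rewrite ltr_pM2r; lra.
rewrite sub0r normrN ger0_norm ?divr_ge0 ?ltr_pdivrMr //; lra.
Unshelve. all: by end_near.
Qed.

Lemma PT_over_lnpow_cvgy n c : (0 < n)%N -> 0 < c -> c < 1 ->
  (fun x => (PT n x)%:R / ln x `^ c) @ +oo --> +oo.
Proof.
move=> n0 c0 c1; apply/cvgryPge => M; near=> x.
have lnx : 1 < ln x by near: x; apply: nbhs_pinfty_ln_gt.
have Lc : 0 < ln x `^ c by apply: powR_gt0; lra.
have : Num.max M 0 * ln x `^ c <= (PT n x)%:R.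
  by near: x; apply: lnpow_le_PT; rewrite // le_max lexx orbT.
have : M * ln x `^ c <= Num.max M 0 * ln x `^ c by rewrite ler_pM2r // le_max lexx.
by rewrite ler_pdivlMr //; lra.
Unshelve. all: by end_near.
Qed.

Lemma ln_PT_over_lnln_cvg1 n : (0 < n)%N ->
  (fun x => ln ((PT n x)%:R : R) / ln (ln x)) @ +oo --> (1 : R).
Proof.
move=> n0; apply/cvgrPdist_lt => e e0.
set c := 1 - Num.min e 1 / 2.
have [c0 c1 ce] : [/\ 0 < c, c < 1 & 1 - c < e].
  have m0 : 0 < Num.min e 1 by rewrite lt_min e0 ltr01.
  have me : Num.min e 1 <= e by rewrite ge_min lexx.
  have m1 : Num.min e 1 <= 1 by rewrite ge_min lexx orbT.
  by rewrite /c; split; lra.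
near=> x.
have lnx : expR 1 < ln x by near: x; apply: nbhs_pinfty_ln_gt.
have lnx0 : 0 < ln x := lt_trans (expR_gt0 1) lnx.
have lnlnx : 1 < ln (ln x) by rewrite -ltr_expR lnK.
have lower : 1 * ln x `^ c <= (PT n x)%:R by near: x; apply: lnpow_le_PT.
have upper : (PT n x)%:R <= 1 * ln x by near: x; apply: PT_le_ln.
rewrite !mul1r in lower upper.
have PT0 : 0 < (PT n x)%:R :> R := lt_le_trans (powR_gt0 c lnx0) lower.
have hi : ln (PT n x)%:R <= ln (ln x) by rewrite ler_ln.
have lo : c * ln (ln x) <= ln (PT n x)%:R by rewrite -ln_powR ler_ln ?posrE ?powR_gt0.
have : c <= ln (PT n x)%:R / ln (ln x) by rewrite ler_pdivlMr //; lra.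
have : ln (PT n x)%:R / ln (ln x) <= 1 by rewrite ler_pdivrMr ?mul1r //; lra.
by move=> r1 cr; rewrite ger0_norm; lra.
Unshelve. all: by end_near.
Qed.

End Asymptotics.

Theorem corollary6 (R : realType) (n : nat) (hn : (0 < n)%N) (c : R)
    (hc0 : 0 < c) (hc1 : c < 1) :
  ((fun x : R => (PT n x)%:R / ln x) @ +oo --> (0 : R)) /\
  ((fun x : R => (PT n x)%:R / (ln x `^ c)) @ +oo --> +oo) /\
  ((fun x : R => ln ((PT n x)%:R : R) / ln (ln x)) @ +oo --> (1 : R)).
Proof.
split; first exact: PT_over_ln_cvg0.
split; first exact: PT_over_lnpow_cvgy.
exact: ln_PT_over_lnln_cvg1.
Qed.
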